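(* Let $n>1$ be an integer, let $\delta>0$ be a real number with $\delta\le (n-1)6^{-n}/c_6$ where $c_6=\sqrt3/8$, and let $M=\{(-2,\dots,-2)+\delta\mathbf z:\mathbf z\in\mathbb{Z}^{n-1}\}\subset\mathbb{R}^{n-1}$. Then $$\#(M\cap I'_{n-1})\le c_7\frac{4^{n-1}}{(n-1)!\,\delta^{n-1}},$$ where $c_7=(1+\sqrt3/162)^3$ and $I'_{n-1}=\{(x_1,\dots,x_{n-1})\in\mathbb{R}^{n-1}: -2\le x_1\le\cdots\le x_{n-1}<2\}$. *)

From mathcomp Require Import all_boot all_order all_algebra.
From mathcomp Require Import boolp reals.
Set Implicit Arguments. Unset Strict Implicit. Unset Printing Implicit Defensive.
Import Order.TTheory GRing.Theory Num.Theory.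
Local Open Scope ring_scope.

Definition c6 (R : realType) : R := Num.sqrt 3 / 8.
Definition c7 (R : realType) : R := (1 + Num.sqrt 3 / 162) ^+ 3.

Definition latticeM (R : realType) (m : nat) (delta : R) : pred 'rV[R]_m :=
  fun x => `[< exists z : 'rV[int]_m,
                 x = const_mx (-2) + delta *: map_mx (fun k : int => k%:~R) z >].

Definition Iprime (R : realType) (m : nat) : pred 'rV[R]_m :=
  fun x => `[< (forall i : 'I_m, -2 <= x ord0 i /\ x ord0 i < 2) /\
               (forall i j : 'I_m, (i <= j)%N -> x ord0 i <= x ord0 j) >].

From mathcomp Require Import all_boot all_order all_algebra.
From mathcomp Require Import boolp reals.
From mathcomp Require Import ring lra zify.
Import Order.TTheory GRing.Theory Num.Theory.
Set Implicit Arguments. Unset Strict Implicit. Unset Printing Implicit Defensive.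
Local Open Scope ring_scope.

(* Write m = n - 1.  A point of M in I'_m is -2 + delta k for a nondecreasing
   tuple k of integers in [0, N], N = floor (4 / delta); hence there are at most
   'C(N + m, m) = (N + m)^_m / m! of them.  With a = 4 / delta and b = delta / 4,
   (N + m)^_m <= prod_(j < m) (a + j + 1) = a^m prod_(j < m) (1 + (j + 1) b),
   and the smallness of delta forces the last product below c_7. *)

Lemma mul_sqr_S_le_exp6 m : (2 < m)%N -> (m * m * m.+1 * 36 <= 6 ^ m.+1)%N.
Proof.
elim: m => [//|m IH]; rewrite ltnS leq_eqVlt => /orP [/eqP <- //|m_gt2].
rewrite expnS; apply: leq_trans (_ : _ <= 6 * (m * m * m.+1 * 36))%N _.
  by nia.
by rewrite leq_mul2l IH.
Qed.

Section ShiftedProducts.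
Variable R : realFieldType.

Lemma ffact_le_prod (a : R) N m : N%:R <= a ->
  ((m + N) ^_ m)%:R <= \prod_(j < m) (a + j.+1%:R).
Proof.
move=> Na; elim: m => [|m IH]; first by rewrite ffactn0 big_ord0.
rewrite addSn ffactSS natrM big_ord_recr /= mulrC.
apply: ler_pM; [exact: ler0n|exact: ler0n|exact: IH|].
by rewrite -addn1 -[m.+1]addn1 !natrD; lra.
Qed.

Lemma prod_addn_factor (a b : R) m : a * b = 1 ->
  \prod_(j < m) (a + j.+1%:R) = a ^+ m * \prod_(j < m) (1 + j.+1%:R * b).
Proof.
move=> ab; elim: m => [|m IH]; first by rewrite !big_ord0 expr0 mulr1.
rewrite !big_ord_recr /= IH exprSr.
have -> : a + m.+1%:R = a * (1 + m.+1%:R * b) by rewrite mulrDr mulr1 mulrCA ab mulr1.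
ring.
Qed.

Lemma prod_1DnM_ge0 (b : R) m : 0 <= b -> 0 <= \prod_(j < m) (1 + j.+1%:R * b).
Proof. by move=> b0; apply: prodr_ge0 => j _; rewrite addr_ge0 // mulr_ge0. Qed.

Lemma prod_1DnM_mul_le2 (b : R) m : 0 <= b ->
  \prod_(j < m) (1 + j.+1%:R * b) * (2 - m%:R * m.+1%:R * b) <= 2.
Proof.
move=> b0; elim: m => [|m IH]; first by rewrite big_ord0 !mul0r subr0 mul1r.
rewrite big_ord_recr /= -mulrA.
apply: le_trans IH; apply: ler_wpM2l; first exact: prod_1DnM_ge0.
rewrite -[m.+2]addn2 -[m.+1]addn1 !natrD.
have k0 : 0 <= m%:R :> R := ler0n _ m.
have : 0 <= (m%:R + 1) * b * (m%:R * (m%:R + 1) * b + 2 * (m%:R + 1) * b).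
  by rewrite !(mulr_ge0, addr_ge0, ler0n).
lra.
Qed.

Lemma ler_1D3M_exp3 (e : R) : 0 <= e -> 1 + 3 * e <= (1 + e) ^+ 3.
Proof.
move=> e0; have : 0 <= e * e * (3 + e) by rewrite !mulr_ge0 ?addr_ge0.
have -> : (1 + e) ^+ 3 = 1 + 3 * e + e * e * (3 + e) by rewrite !exprS expr0; ring.
lra.
Qed.

(* For [m >= 3] the hypothesis gives [m (m + 1) b <= 3 e], so the product is at
   most [2 / (2 - 3 e) <= 1 + 3 e] by [prod_1DnM_mul_le2]; for [m = 1, 2] this
   estimate is too weak and the product is bounded directly. *)
Lemma prod_1DnM_le_exp3 (b e : R) m : (0 < m)%N -> 0 <= b -> 0 <= e <= 1 / 3 ->
  b * 6 ^+ m.+1 <= 108 * m%:R * e ->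
  \prod_(j < m) (1 + j.+1%:R * b) <= (1 + e) ^+ 3.
Proof.
move=> m_gt0 b0 /andP [e0 e_le] hb.
have cube_ge := ler_1D3M_exp3 e0.
case: m m_gt0 hb => [//|[|[|m]]] _ hb.
- rewrite big_ord1 mul1r; move: hb; rewrite !exprS expr0; lra.
- rewrite big_ord_recr big_ord1 /= mul1r.
  have be : b <= e by move: hb; rewrite !exprS expr0; lra.
  have : (1 + b) * (1 + 2%:R * b) <= (1 + e) * (1 + 2 * e).
    by apply: ler_pM; lra.
  have : 0 <= e * e * (1 + e) by rewrite !mulr_ge0 ?addr_ge0.
  have -> : (1 + e) ^+ 3 = (1 + e) * (1 + 2 * e) + e * e * (1 + e) by rewrite !exprS expr0; ring.
  lra.
- set M := m.+3 in hb *.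
  have hP := prod_1DnM_mul_le2 M b0.
  have M0 : 0 <= M%:R :> R := ler0n _ M.
  have hM : (M%:R * M%:R * M.+1%:R * 36 : R) <= 6 ^+ M.+1.
    by rewrite -!natrM -natrX ler_nat mul_sqr_S_le_exp6.
  have y_le : M%:R * M.+1%:R * b <= 3 * e.
    rewrite -(ler_pM2r (exprn_gt0 M.+1 (ltr0n R 6))).
    apply: le_trans (_ : M%:R * M.+1%:R * (108 * M%:R * e) <= _).
      by rewrite -[X in X <= _]mulrA ler_wpM2l // mulr_ge0.
    apply: le_trans (_ : 3 * e * (M%:R * M%:R * M.+1%:R * 36) <= _); first by lra.
    by rewrite ler_wpM2l // mulr_ge0.
  apply: le_trans cube_ge.
  rewrite -(ler_pM2r (_ : 0 < 2 - M%:R * M.+1%:R * b)); last by lra.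
  apply: le_trans hP _.
  have : 0 <= e * (1 - 3 * e) by rewrite mulr_ge0 //; lra.
  have : 0 <= (1 + 3 * e) * (3 * e - M%:R * M.+1%:R * b) by rewrite mulr_ge0 //; lra.
  lra.
Qed.

End ShiftedProducts.

Section LatticeCoordinates.
Variables (R : realType) (m : nat) (d : R).
Hypothesis d_gt0 : 0 < d.

Definition lattice_coord (x : 'rV[R]_m) (i : 'I_m) : nat :=
  Num.truncn ((x ord0 i + 2) / d).

Lemma latticeM_Iprime_nat (x : 'rV[R]_m) i : latticeM d x && Iprime x ->
  exists2 k : nat, x ord0 i = d * k%:R - 2 & d * k%:R < 4.
Proof.
case/andP => /asboolP [z ->] /asboolP [/(_ i) [] + + _]; rewrite !mxE.
case: (z ord0 i) => k; rewrite ?NegzE ?intrN -pmulrn => ge2 lt2.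
  by exists k; lra.
have : 0 < d * k.+1%:R by rewrite mulr_gt0.
lra.
Qed.

Lemma lattice_coordE (x : 'rV[R]_m) i : latticeM d x && Iprime x ->
  x ord0 i = d * (lattice_coord x i)%:R - 2.
Proof.
rewrite /lattice_coord => /(latticeM_Iprime_nat i) [k -> _].
by rewrite subrK mulrC mulfK ?gt_eqF // natrK mulrC.
Qed.

Lemma lattice_coord_le (x : 'rV[R]_m) i : latticeM d x && Iprime x ->
  (lattice_coord x i <= Num.truncn (4 / d))%N.
Proof.
move=> xMI; have xE := lattice_coordE i xMI.
case/andP: xMI => _ /asboolP [/(_ i) [_ lt2] _].
rewrite truncn_ge_nat ?divr_ge0 ?ltW // ltr_pdivlMr // mulrC; lra.
Qed.

Lemma lattice_coord_homo (x : 'rV[R]_m) : Iprime x ->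
  {homo lattice_coord x : i j / (i <= j)%N}.
Proof.
move=> /asboolP [_ x_homo] i j le_ij.
by apply: le_truncn; rewrite ler_pM2r ?invr_gt0 // lerD2r x_homo.
Qed.

Lemma size_latticeM_Iprime (s : seq 'rV[R]_m) : uniq s ->
  (forall x, x \in s -> latticeM d x && Iprime x) ->
  (size s <= 'C(m + Num.truncn (4 / d), m))%N.
Proof.
move=> s_uniq s_MI; set N := Num.truncn (4 / d).
pose F x : m.-tuple 'I_N.+1 := [tuple inord (lattice_coord x i) | i < m].
have coord_small x i : x \in s -> (lattice_coord x i < N.+1)%N.
  by move=> xs; rewrite ltnS lattice_coord_le // s_MI.
have F_inj : {in s &, injective F}.
  move=> x y xs ys Fxy; apply/rowP => i.
  rewrite (lattice_coordE i (s_MI x xs)) (lattice_coordE i (s_MI y ys)).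
  have := congr1 (fun t => val (tnth t i)) Fxy.
  by rewrite /= !tnth_mktuple !inordK ?coord_small // => ->.
rewrite -(card_sorted_tuples m N) cardE -(size_map F).
apply: uniq_leq_size; first by rewrite map_inj_in_uniq.
move=> _ /mapP [x xs ->]; rewrite mem_enum inE.
have -> : [seq val i | i <- F x] = [seq lattice_coord x i | i <- enum 'I_m].
  by rewrite /= -map_comp; apply: eq_map => i /=; rewrite inordK ?coord_small.
rewrite sorted_map.
apply: (sub_sorted _ (_ : sorted (relpre val ltn) (enum 'I_m))).
  by move=> i j /ltnW; apply: lattice_coord_homo; case/andP: (s_MI x xs).
by rewrite -sorted_map val_enum_ord iota_ltn_sorted.
Qed.

End LatticeCoordinates.

Lemma sqrt3_mul_sqrt3 (R : rcfType) : Num.sqrt 3 * Num.sqrt 3 = 3 :> R.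
Proof. by rewrite -expr2 sqr_sqrtr ?ler0n. Qed.

Lemma sqrt3_div162_ge0_le (R : realType) : 0 <= Num.sqrt (3 : R) / 162 <= 1 / 3.
Proof.
have sqrt3_sq := sqrt3_mul_sqrt3 R.
have sqrt3_ge0 := sqrtr_ge0 (3 : R).
by apply/andP; split; nra.
Qed.

Lemma c6_bound_scaled (R : realType) m (d : R) : 0 < d ->
  d <= m%:R * 6 ^- m.+1 / c6 R ->
  d / 4 * 6 ^+ m.+1 <= 108 * m%:R * (Num.sqrt 3 / 162).
Proof.
have sqrt3_gt0 : 0 < Num.sqrt 3 :> R by rewrite sqrtr_gt0 ltr0n.
move=> d_gt0; rewrite /c6 ler_pdivlMr ?divr_gt0 // ler_pdivlMr ?exprn_gt0 //.
move/(ler_wpM2r (ltW sqrt3_gt0)).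
have -> : d * (Num.sqrt 3 / 8) * 6 ^+ m.+1 * Num.sqrt 3 =
          d * 6 ^+ m.+1 * (Num.sqrt 3 * Num.sqrt 3) / 8 by ring.
rewrite sqrt3_mul_sqrt3; lra.
Qed.

Unset Implicit Arguments.

Theorem lemma2p3p2 (R : realType) (n : nat) (delta : R) :
  (1 < n)%N -> 0 < delta ->
  delta <= (n.-1)%:R * (6 ^- n) / c6 R ->
  forall s : seq 'rV[R]_(n.-1),
    uniq s ->
    (forall x, x \in s -> latticeM delta x && Iprime x) ->
    (size s)%:R <= c7 R * (4 ^+ n.-1) / ((n.-1)`!%:R * delta ^+ n.-1).
Proof.
case: n => [//|m] /= m_gt0 d_gt0 d_small s s_uniq s_MI.
set a := 4 / delta; set N := Num.truncn a.
have prod_le : \prod_(j < m) (1 + j.+1%:R * (delta / 4)) <= c7 R.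
  apply: prod_1DnM_le_exp3 (c6_bound_scaled d_gt0 d_small) => //.
    by rewrite divr_ge0 ?ltW.
  exact: sqrt3_div162_ge0_le.
have a_ge_N : N%:R <= a by rewrite truncn_le divr_ge0 ?ltW.
have card_le : (size s)%:R * m`!%:R <= a ^+ m * c7 R.
  apply: le_trans (_ : 'C(m + N, m)%:R * m`!%:R <= _).
    by rewrite ler_pM2r ?ltr0n ?fact_gt0 // ler_nat size_latticeM_Iprime.
  rewrite -natrM bin_ffact; apply: le_trans (ffact_le_prod m a_ge_N) _.
  rewrite (@prod_addn_factor _ _ (delta / 4)); last by rewrite /a; field; lra.
  by apply: ler_wpM2l prod_le; rewrite exprn_ge0 // divr_ge0 ?ltW.
rewrite ler_pdivlMr ?mulr_gt0 ?ltr0n ?fact_gt0 ?exprn_gt0 //.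
rewrite mulrA; apply: le_trans (ler_wpM2r (exprn_ge0 m (ltW d_gt0)) card_le) _.
by rewrite mulrAC -exprMn divfK ?gt_eqF // mulrC.
Qed.
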